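(* For any $a,b,\alpha,\beta$ and any natural number $n\ge1$, \[ \Psi\left(\begin{array}{cc|c} a & b & n \\ \alpha & \beta & \lfloor n/2\rfloor \end{array}\right)=(-1)^{\lfloor n/2\rfloor}\Psi(\alpha,\beta,n),\qquad \Phi\left(\begin{array}{cc|c} a & b & n \\ \alpha & \beta & \lfloor (n-1)/2\rfloor \end{array}\right)=(-1)^{\lfloor (n-1)/2\rfloor}\Phi(\alpha,\beta,n). \]
   Context: $\delta(m)=1$ for $m$ odd, $0$ for $m$ even; $\lfloor\cdot\rfloor$ is the floor. $\Psi(a,b,n)$, $\Phi(a,b,n)$ are defined by $\Psi(a,b,0)=2$, $\Psi(a,b,1)=1$, $\Psi(a,b,n+1)=(2a-b)^{\delta(n)}\Psi(a,b,n)-a\Psi(a,b,n-1)$ and $\Phi(a,b,0)=0$, $\Phi(a,b,1)=1$, $\Phi(a,b,n+1)=(2a-b)^{\delta(n+1)}\Phi(a,b,n)-a\Phi(a,b,n-1)$. For indeterminates $a,b,\alpha,\beta$ and $n\ge1$, $\Psi\left(\begin{array}{cc|c} a & b & n \\ \alpha & \beta & r \end{array}\right)$ ($0\le r\le\lfloor n/2\rfloor$) and $\Phi\left(\begin{array}{cc|c} a & b & n \\ \alpha & \beta & r \end{array}\right)$ ($0\le r\le\lfloor (n-1)/2\rfloor$) are the unique polynomials in $\mathbb{Z}[a,b,\alpha,\beta]$ such that, identically in $x,y$, $(\beta a-\alpha b)^{\lfloor n/2\rfloor}\frac{x^n+y^n}{(x+y)^{\delta(n)}}=\sum_{r}\Psi\left(\begin{array}{cc|c}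 a & b & n \\ \alpha & \beta & r \end{array}\right)(\alpha x^2+\beta xy+\alpha y^2)^{\lfloor n/2\rfloor-r}(ax^2+bxy+ay^2)^r$ and $(\beta a-\alpha b)^{\lfloor (n-1)/2\rfloor}\frac{x^n-y^n}{(x-y)(x+y)^{\delta(n-1)}}=\sum_{r}\Phi\left(\begin{array}{cc|c} a & b & n \\ \alpha & \beta & r \end{array}\right)(\alpha x^2+\beta xy+\alpha y^2)^{\lfloor (n-1)/2\rfloor-r}(ax^2+bxy+ay^2)^r$. For numerical values of $a,b,\alpha,\beta$ they are evaluated. *)

From HB Require Import structures.
From mathcomp Require Import all_boot all_order all_algebra.
From mathcomp Require Import mpoly.
Set Implicit Arguments. Unset Strict Implicit. Unset Printing Implicit Defensive.
Import GRing.Theory.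
Local Open Scope ring_scope.

(* delta(m) = odd m (coerced to nat). *)

(* psi2 a b n = (Psi(a,b,n), Psi(a,b,n+1)) *)
Fixpoint psi2 (R : comRingType) (a b : R) (n : nat) : R * R :=
  match n with
  | 0 => (2%:R, 1)
  | m.+1 => let (p, q) := psi2 a b m in
            (q, (2%:R * a - b) ^+ (odd m.+1) * q - a * p)
  end.
Definition Psi (R : comRingType) (a b : R) (n : nat) : R := (psi2 a b n).1.

(* phi2 a b n = (Phi(a,b,n), Phi(a,b,n+1)) *)
Fixpoint phi2 (R : comRingType) (a b : R) (n : nat) : R * R :=
  match n with
  | 0 => (0, 1)
  | m.+1 => let (p, q) := phi2 a b m in
            (q, (2%:R * a - b) ^+ (odd m.+2) * q - a * p)
  end.
Definition Phi (R : comRingType) (a b : R) (n : nat) : R := (phi2 a b n).1.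

Notation P := {mpoly int[4]}.
Definition va : P := 'X_(0 : 'I_4).
Definition vb : P := 'X_(1 : 'I_4).
Definition valpha : P := 'X_(2 : 'I_4).
Definition vbeta : P := 'X_(3 : 'I_4).

(* Bivariate polynomials in x, y over R, represented as R[y][x]. *)
Definition Xv (R : comRingType) : {poly {poly R}} := 'X.
Definition Yv (R : comRingType) : {poly {poly R}} := ('X)%:P.
Definition cst (R : comRingType) (c : R) : {poly {poly R}} := c%:P%:P.

Definition qform (R : comRingType) (u v : R) : {poly {poly R}} :=
  cst u * Xv R ^+ 2 + cst v * Xv R * Yv R + cst u * Yv R ^+ 2.

(* c (r = 0..n/2) are the coefficients Psi(a b n | alpha beta r):
   (beta a - alpha b)^{n/2} (x^n + y^n)/(x+y)^{delta n}
     = sum_r c r (alpha x^2+beta xy+alpha y^2)^{n/2-r} (a x^2+b xy+a y^2)^r,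
   with the division cleared (multiplication by (x+y)^{delta n}). *)
Definition is_Psi_coefs (n : nat) (c : nat -> P) : Prop :=
  cst ((vbeta * va - valpha * vb) ^+ n./2) * (Xv P ^+ n + Yv P ^+ n)
  = (Xv P + Yv P) ^+ (odd n) *
    \sum_(r < (n./2).+1)
       cst (c r) * qform valpha vbeta ^+ (n./2 - r) * qform va vb ^+ r.

(* Same for Phi(a b n | alpha beta r), r = 0..(n-1)/2:
   (beta a - alpha b)^{(n-1)/2} (x^n - y^n)/((x-y)(x+y)^{delta(n-1)}) = sum ... *)
Definition is_Phi_coefs (n : nat) (c : nat -> P) : Prop :=
  cst ((vbeta * va - valpha * vb) ^+ (n.-1)./2) * (Xv P ^+ n - Yv P ^+ n)
  = (Xv P - Yv P) * (Xv P + Yv P) ^+ (odd n.-1) *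
    \sum_(r < ((n.-1)./2).+1)
       cst (c r) * qform valpha vbeta ^+ ((n.-1)./2 - r) * qform va vb ^+ r.

From HB Require Import structures.
From mathcomp Require Import all_boot all_order all_algebra.
From mathcomp Require Import mpoly ring.
Set Implicit Arguments.
Unset Strict Implicit.
Unset Printing Implicit Defensive.
Import GRing.Theory.
Local Open Scope ring_scope.

(* Put y := alpha.  With M := x^2 + beta x + alpha^2 and D := beta a - alpha b
   the two quadratic forms become alpha M and a M - D x, so modulo M the
   expansion of either identity collapses to its top coefficient times
   (-D x)^m.  On the other side, x^n + alpha^n and x^n - alpha^n satisfy the
   same second-order recurrence as Psi and Phi once (x + alpha)^2 is reduced to
   (2 alpha - beta) x, which yields Psi(alpha, beta, n) (x + alpha)^delta(n)
   x^m, resp. (x - alpha) Phi(alpha, beta, n) (x + alpha)^delta(n-1) x^m.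
   Hence (D^m Psi - c_m (-D)^m) (x + alpha)^delta x^m is divisible by M.
   Multiplying by the conjugates of x and x +- alpha (the other root of M is
   -beta - x) turns this into a nonzero constant multiple of
   D^m Psi - c_m (-D)^m, which is a constant divisible by the monic quadratic
   M, hence zero. *)

Lemma nat_ind2 (Q : nat -> Prop) :
  Q 0 -> Q 1 -> (forall n, Q n -> Q n.+1 -> Q n.+2) -> forall n, Q n.
Proof.
move=> Q0 Q1 QSS n; suff: Q n /\ Q n.+1 by case.
by elim: n => [|n [Qn Qn1]]; split=> //; apply: QSS.
Qed.

Lemma PsiSS (R : comNzRingType) (a b : R) n :
  Psi a b n.+2 = (2%:R * a - b) ^+ odd n.+1 * Psi a b n.+1 - a * Psi a b n.
Proof. by rewrite /Psi /=; case: (psi2 a b n). Qed.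

Lemma PhiSS (R : comNzRingType) (a b : R) n :
  Phi a b n.+2 = (2%:R * a - b) ^+ odd n * Phi a b n.+1 - a * Phi a b n.
Proof. by rewrite /Phi /=; case: (phi2 a b n) => p q /=; rewrite negbK. Qed.

Lemma rmorph_Psi (R S : comNzRingType) (f : {rmorphism R -> S}) (a b : R) n :
  f (Psi a b n) = Psi (f a) (f b) n.
Proof.
elim/nat_ind2: n => [||n IHn IHn1].
- exact: (rmorph_nat f 2).
- exact: rmorph1.
by rewrite !PsiSS -IHn -IHn1 rmorphB !rmorphM rmorphXn rmorphB rmorphM
           rmorph_nat.
Qed.

Lemma rmorph_Phi (R S : comNzRingType) (f : {rmorphism R -> S}) (a b : R) n :
  f (Phi a b n) = Phi (f a) (f b) n.
Proof.
elim/nat_ind2: n => [||n IHn IHn1].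
- exact: rmorph0.
- exact: rmorph1.
by rewrite !PhiSS -IHn -IHn1 rmorphB !rmorphM rmorphXn rmorphB rmorphM
           rmorph_nat.
Qed.

Section Congruence.
Variables (S : comNzRingType) (m : S).

Definition eqmod (x y : S) : Prop := exists z, x = y + z * m.

Lemma eq_eqmod x y : x = y -> eqmod x y.
Proof. by move->; exists 0; rewrite mul0r addr0. Qed.

Lemma eqmod_refl x : eqmod x x. Proof. exact: eq_eqmod. Qed.

Lemma eqmod_sym x y : eqmod x y -> eqmod y x.
Proof. by case=> z ->; exists (- z); ring. Qed.

Lemma eqmod_trans y x z : eqmod x y -> eqmod y z -> eqmod x z.
Proof. by case=> z1 -> [z2 ->]; exists (z1 + z2); ring. Qed.

Lemma eqmodD x1 y1 x2 y2 :
  eqmod x1 y1 -> eqmod x2 y2 -> eqmod (x1 + x2) (y1 + y2).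
Proof. by case=> z1 -> [z2 ->]; exists (z1 + z2); ring. Qed.

Lemma eqmodB x1 y1 x2 y2 :
  eqmod x1 y1 -> eqmod x2 y2 -> eqmod (x1 - x2) (y1 - y2).
Proof. by case=> z1 -> [z2 ->]; exists (z1 - z2); ring. Qed.

Lemma eqmodM x1 y1 x2 y2 :
  eqmod x1 y1 -> eqmod x2 y2 -> eqmod (x1 * x2) (y1 * y2).
Proof.
by case=> z1 -> [z2 ->]; exists (y1 * z2 + z1 * y2 + z1 * z2 * m); ring.
Qed.

Lemma eqmodMl z x y : eqmod x y -> eqmod (z * x) (z * y).
Proof. exact/eqmodM/eqmod_refl. Qed.

Lemma eqmodX x y k : eqmod x y -> eqmod (x ^+ k) (y ^+ k).
Proof.
move=> xy; elim: k => [|k IHk]; first exact: eqmod_refl.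
by rewrite !exprS; apply: eqmodM.
Qed.

Lemma eqmod_sum I (r : seq I) (P : pred I) (F G : I -> S) :
  (forall i, P i -> eqmod (F i) (G i)) ->
  eqmod (\sum_(i <- r | P i) F i) (\sum_(i <- r | P i) G i).
Proof.
by move=> FG; apply: big_ind2 => //; [apply: eqmod_refl | apply: eqmodD].
Qed.

Lemma eqmod_mulr0 z : eqmod (z * m) 0.
Proof. by exists z; rewrite add0r. Qed.

Lemma eqmod_sub0 x y : eqmod x y -> eqmod (x - y) 0.
Proof. by move/eqmodB/(_ (eqmod_refl y)); rewrite subrr. Qed.

Lemma eqmod_sum_top k (c : nat -> S) u v w :
  eqmod (\sum_(r < k.+1) c r * (u * m) ^+ (k - r) * (v * m + w) ^+ r)
        (c k * w ^+ k).
Proof.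
have top r : eqmod (c r * (u * m) ^+ (k - r) * (v * m + w) ^+ r)
                   (c r * 0 ^+ (k - r) * w ^+ r).
  apply/eqmodM/eqmodX; last by exists v; rewrite addrC.
  by apply/eqmodMl/eqmodX/eqmod_mulr0.
apply: (eqmod_trans (y := \sum_(r < k.+1) c r * 0 ^+ (k - r) * w ^+ r)).
  by apply: eqmod_sum => r _; apply: top.
apply: eq_eqmod; rewrite big_ord_recr /= subnn expr0 mulr1.
rewrite big1 ?add0r // => r _.
by rewrite expr0n subn_eq0 leqNgt ltn_ord mulr0 mul0r.
Qed.

End Congruence.

Lemma eqmod_polyC0 (R : idomainType) (m : {poly R}) (c : R) :
  (1 < size m)%N -> eqmod m c%:P 0 -> c = 0.
Proof.
move=> m_gt1 [z]; rewrite add0r; have [-> | z0 cE] := eqVneq z 0.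
  by rewrite mul0r => /polyC_inj.
have m0 : m != 0 by rewrite -size_poly_gt0 ltnW.
have z_gt0 : (0 < size z)%N by rewrite size_poly_gt0.
have : (size m <= size c%:P)%N.
  by rewrite cE size_mul // -(prednK z_gt0) addSn leq_addl.
by rewrite leqNgt (leq_ltn_trans (size_polyC_leq1 c) m_gt1).
Qed.

Lemma eqmod_cancel (R : idomainType) (m g h : {poly R}) (c k : R) :
  (1 < size m)%N -> c != 0 -> eqmod m (g * h) c%:P -> eqmod m (k%:P * g) 0 ->
  k = 0.
Proof.
move=> m_gt1 c0 ghc kg0; apply/eqP; rewrite -(mulIr_eq0 _ (mulIf c0)).
apply/eqP/(eqmod_polyC0 m_gt1); rewrite polyCM.
apply: eqmod_trans (eqmodMl _ (eqmod_sym ghc)) _.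
by rewrite mulrA -(mul0r h); apply: eqmodM kg0 (eqmod_refl _ _).
Qed.

Section LucasCongruences.
Variables (S : comNzRingType) (a b t : S).
Local Notation m := (t ^+ 2 + b * t + a ^+ 2).

Lemma eqmod_lucas (u c : nat -> S) (w : S) :
  (forall n, u n.+2 = (t + a) * u n.+1 - a * t * u n) ->
  (forall n, c n.+2 = (2%:R * a - b) ^+ odd n.+1 * c n.+1 - a * c n) ->
  u 0 = w * c 0 -> u 1 = w * c 1 * (t + a) ->
  forall n, eqmod m (u n) (w * c n * (t + a) ^+ odd n * t ^+ n./2).
Proof.
move=> uSS cSS u0 u1; elim/nat_ind2 => [||n IHn IHn1].
- by apply: eq_eqmod; rewrite u0 !mulr1.
- by apply: eq_eqmod; rewrite u1 mulr1.
rewrite uSS cSS; apply: eqmod_trans (eqmodB (eqmodMl _ IHn1) (eqmodMl _ IHn)) _.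
rewrite /= negbK uphalf_half.
(* In the even case use (t + a)^2 = m + (2a - b) t. *)
set k := n./2; case: (odd n) => /=.
- by apply: eq_eqmod; rewrite !exprS; ring.
- by exists (w * c n.+1 * t ^+ k); rewrite !exprS; ring.
Qed.

Lemma eqmod_Psi n :
  eqmod m (t ^+ n + a ^+ n) (Psi a b n * (t + a) ^+ odd n * t ^+ n./2).
Proof.
rewrite -[Psi a b n]mul1r.
apply: (eqmod_lucas (u := fun n => t ^+ n + a ^+ n)) n => [n|n||].
- by rewrite !exprS; ring.
- exact: PsiSS.
- by rewrite !expr0 mul1r.
- by rewrite !expr1 !mul1r.
Qed.

Lemma eqmod_Phi n :
  eqmod m (t ^+ n.+1 - a ^+ n.+1)
          ((t - a) * Phi a b n.+1 * (t + a) ^+ odd n * t ^+ n./2).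
Proof.
apply: (eqmod_lucas (u := fun n => t ^+ n.+1 - a ^+ n.+1)
                    (c := fun n => Phi a b n.+1)) n => [n|n||].
- by rewrite !exprS; ring.
- exact: PhiSS.
- by rewrite expr1 mulr1.
- by rewrite /Phi /= expr0; ring.
Qed.

(* -b - t is the conjugate root of m: each factor times its conjugate is a
   norm, which lies in the base ring modulo m. *)
Lemma eqmod_norm f e k :
  eqmod m ((t - a) ^+ f * (t + a) ^+ e * t ^+ k *
           ((- b - t - a) ^+ f * (- b - t + a) ^+ e * (- b - t) ^+ k))
          ((a * (2%:R * a + b)) ^+ f * (a * (2%:R * a - b)) ^+ e *
           (a ^+ 2) ^+ k).
Proof.
have norm_minus : eqmod m ((t - a) * (- b - t - a)) (a * (2%:R * a + b)).
  by exists (- 1); ring.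
have norm_plus : eqmod m ((t + a) * (- b - t + a)) (a * (2%:R * a - b)).
  by exists (- 1); ring.
have norm_t : eqmod m (t * (- b - t)) (a ^+ 2) by exists (- 1); ring.
have := eqmodM (eqmodM (eqmodX f norm_minus) (eqmodX e norm_plus))
               (eqmodX k norm_t).
rewrite !exprMn => norms.
by apply: (eqmod_trans _ norms); apply: eq_eqmod; ring.
Qed.

End LucasCongruences.

Local Notation Mp := ('X ^+ 2 + vbeta%:P * 'X + valpha%:P ^+ 2 : {poly P}).
Local Notation D := (vbeta * va - valpha * vb).
Local Notation pfactors f e k :=
  (('X - valpha%:P) ^+ f * ('X + valpha%:P) ^+ e * 'X ^+ k : {poly P}).
Local Notation evaly :=
  (map_poly (horner_eval valpha) : {rmorphism {poly {poly P}} -> {poly P}}).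

Lemma size_Mp : size Mp = 3.
Proof.
rewrite -addrA size_polyDl size_polyXn // -polyC_exp size_MXaddC.
by case: ifP => // _; rewrite !ltnS size_polyC_leq1.
Qed.

Lemma meval_neq0 (v : 'I_4 -> int) (p : P) : p.@[v] != 0 -> p != 0.
Proof. by apply: contraNneq => ->; rewrite meval0. Qed.

Local Notation pt := (fun i : 'I_4 => [:: 1; 0; 1; 3]`_i : int).

Lemma valpha_neq0 : valpha != 0.
Proof. by apply: (@meval_neq0 pt); rewrite mevalXU. Qed.

Lemma D_neq0 : D != 0.
Proof. by apply: (@meval_neq0 pt); rewrite mevalB !mevalM !mevalXU. Qed.

Lemma twice_valpha_add_vbeta_neq0 : 2%:R * valpha + vbeta != 0.
Proof.
by apply: (@meval_neq0 pt); rewrite mevalD mevalM !mevalXU rmorph_nat.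
Qed.

Lemma twice_valpha_sub_vbeta_neq0 : 2%:R * valpha - vbeta != 0.
Proof.
by apply: (@meval_neq0 pt); rewrite mevalB mevalM !mevalXU rmorph_nat.
Qed.

Lemma eqmod_Mp_cancel f e k (K : P) :
  eqmod Mp (K%:P * pfactors f e k) 0 -> K = 0.
Proof.
set c := (valpha * (2%:R * valpha + vbeta)) ^+ f *
         (valpha * (2%:R * valpha - vbeta)) ^+ e * (valpha ^+ 2) ^+ k.
have norm := eqmod_norm valpha%:P vbeta%:P 'X f e k.
apply: (eqmod_cancel (c := c)); first by rewrite size_Mp.
  by rewrite /c !(mulf_neq0, expf_neq0, valpha_neq0,
                  twice_valpha_add_vbeta_neq0, twice_valpha_sub_vbeta_neq0).
rewrite /c !(polyC_natr, polyC_exp, polyCB, polyCD, polyCM).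
exact norm.
Qed.

Lemma coef_top_eq f e k (Q ck : P) (L : {poly P}) :
  eqmod Mp L ((D ^+ k * Q)%:P * pfactors f e k) ->
  eqmod Mp L ((ck * (- D) ^+ k)%:P * pfactors f e k) ->
  ck = (-1) ^+ k * Q.
Proof.
move=> LQ Lck.
have : D ^+ k * Q - ck * (- D) ^+ k = 0.
  apply: (eqmod_Mp_cancel (f := f) (e := e) (k := k)).
  by rewrite polyCB mulrBl; apply/eqmod_sub0/(eqmod_trans (eqmod_sym LQ)).
move/eqP; rewrite subr_eq0 => /eqP DQ; apply: (mulIf (expf_neq0 k D_neq0)).
by rewrite -mulrA [Q * _]mulrC DQ [(- D) ^+ k]exprNn mulrCA signrMK.
Qed.

Lemma evaly_cst (c : P) : evaly (cst c) = c%:P.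
Proof.
rewrite -[LHS]/(map_poly (horner_eval valpha) (cst c)) map_polyC.
by congr (_ %:P); exact: hornerC.
Qed.

Lemma evaly_X : evaly (Xv P) = 'X.
Proof. exact: map_polyX. Qed.

Lemma evaly_Y : evaly (Yv P) = valpha%:P.
Proof.
rewrite -[LHS]/(map_poly (horner_eval valpha) (Yv P)) map_polyC.
by congr (_ %:P); exact: hornerX.
Qed.

(* Xv, Yv and cst are abstracted before rewriting: otherwise matching them
   against one another unfolds concrete polynomials over {mpoly int[4]}, which
   does not terminate in practice. *)
Lemma evaly_qform (u v : P) :
  evaly (qform u v) = u%:P * Mp + (v%:P * valpha%:P - u%:P * vbeta%:P) * 'X.
Proof.
rewrite /qform; move: evaly_X evaly_Y (evaly_cst u) (evaly_cst v).
move: (Xv P) (Yv P) (cst u) (cst v) => X Y U V evX evY evU evV.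
by rewrite !(rmorphD, rmorphXn, rmorphM) evX evY evU evV; ring.
Qed.

Lemma evaly_qform_alpha_beta : evaly (qform valpha vbeta) = valpha%:P * Mp.
Proof. by rewrite evaly_qform; ring. Qed.

Lemma evaly_qform_a_b : evaly (qform va vb) = va%:P * Mp - D%:P * 'X.
Proof. by rewrite evaly_qform polyCB !polyCM; ring. Qed.

Lemma eqmod_evaly_coefs k (c : nat -> P) :
  eqmod Mp (evaly (\sum_(r < k.+1)
              cst (c r) * qform valpha vbeta ^+ (k - r) * qform va vb ^+ r))
           ((c k * (- D) ^+ k)%:P * 'X ^+ k).
Proof.
have evaly_term r :
    evaly (cst (c r) * qform valpha vbeta ^+ (k - r) * qform va vb ^+ r)
    = (c r)%:P * (valpha%:P * Mp) ^+ (k - r) * (va%:P * Mp - D%:P * 'X) ^+ r.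
  move: (evaly_cst (c r)) evaly_qform_alpha_beta evaly_qform_a_b.
  move: (cst (c r)) (qform valpha vbeta) (qform va vb) => C Q1 Q2 evC evQ1 evQ2.
  by rewrite !rmorphM !rmorphXn evC evQ1 evQ2.
rewrite rmorph_sum (eq_bigr _ (fun (r : 'I_k.+1) _ => evaly_term r)).
apply: (eqmod_trans (eqmod_sum_top _ _ (fun r => (c r)%:P) _ _ _)).
by apply: eq_eqmod; rewrite -mulNr exprMn mulrA -polyCN -polyC_exp -polyCM.
Qed.

Lemma Psi_coef_top n (c : nat -> P) :
  is_Psi_coefs n c -> c n./2 = (-1) ^+ n./2 * Psi valpha vbeta n.
Proof.
rewrite /is_Psi_coefs; set k := n./2; set sum := \sum_(r < k.+1) _.
move: evaly_X evaly_Y (evaly_cst (D ^+ k)) (eqmod_evaly_coefs k c).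
move: (Xv P) (Yv P) (cst (D ^+ k)) => X Y C evX evY evC sumE /(congr1 evaly).
rewrite !(rmorphM, rmorphD, rmorphXn) evX evY evC => E.
apply: (coef_top_eq (f := 0) (e := odd n)
          (L := ('X + valpha%:P) ^+ odd n * evaly sum)).
  rewrite -E; apply: (eqmod_trans (eqmodMl _ (eqmod_Psi _ _ _ n))).
  by apply: eq_eqmod; rewrite -rmorph_Psi polyCM expr0 mul1r; ring.
apply: (eqmod_trans (eqmodMl _ sumE)).
by apply: eq_eqmod; rewrite expr0 mul1r; ring.
Qed.

Lemma Phi_coef_top n (c : nat -> P) : (1 <= n)%N ->
  is_Phi_coefs n c -> c (n.-1)./2 = (-1) ^+ (n.-1)./2 * Phi valpha vbeta n.
Proof.
case: n => [//|j] _; rewrite /is_Phi_coefs /=; set k := j./2.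
set sum := \sum_(r < k.+1) _.
move: evaly_X evaly_Y (evaly_cst (D ^+ k)) (eqmod_evaly_coefs k c).
move: (Xv P) (Yv P) (cst (D ^+ k)) => X Y C evX evY evC sumE /(congr1 evaly).
rewrite !(rmorphM, rmorphB, rmorphD, rmorphXn) evX evY evC => E.
apply: (coef_top_eq (f := 1) (e := odd j)
          (L := ('X - valpha%:P) * ('X + valpha%:P) ^+ odd j * evaly sum)).
  rewrite -E; apply: (eqmod_trans (eqmodMl _ (eqmod_Phi _ _ _ j))).
  by apply: eq_eqmod; rewrite -rmorph_Phi polyCM expr1; ring.
apply: (eqmod_trans (eqmodMl _ sumE)).
by apply: eq_eqmod; rewrite expr1; ring.
Qed.

Theorem theorem6p1 (n : nat) : (1 <= n)%N ->
  (forall c : nat -> P, is_Psi_coefs n c ->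
     c n./2 = (-1) ^+ n./2 * Psi valpha vbeta n) /\
  (forall c : nat -> P, is_Phi_coefs n c ->
     c (n.-1)./2 = (-1) ^+ (n.-1)./2 * Phi valpha vbeta n).
Proof.
by move=> n_gt0; split=> c; [apply: Psi_coef_top | apply: Phi_coef_top].
Qed.
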